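(* Let $c\in Z^{10}$ with $\sum_i c_i=0$, $t\nmid C_i$ for all odd $i$, $t\mid C_3+C_5$, and $t\nmid C_i+C_{i+2}$ for all odd $i\neq 3$ (indices mod $10$). Then there exists $\beta\in\mathbb{C}\setminus\{0,-1,-2\}$ such that $\mathbb{M}(c)\cong\mathbb{M}_\beta$ as $B_{5,10}$-modules.
   Context: Let $Z=\mathbb{C}[[t]]$. Let $\Gamma_{10}$ be the quiver with vertices $0,1,\dots,9$ (indices taken mod $10$) on a cycle and arrows $x_i\colon i-1\to i$, $y_i\colon i\to i-1$ for $i=1,\dots,10$. Let $B_{5,10}$ be the completed path algebra of $\Gamma_{10}$ modulo the closed ideal generated by $xy=yx$ and $x^5=y^5$ at every vertex. For $b=(b_1,\dots,b_{10})\in Z^{10}$ with $\sum_i b_i=0$, the $B_{5,10}$-module $\mathbb{M}(b)$ has $V_i=Z\oplus Z$ at every vertex, and for odd $j$: $x_j=\begin{pmatrix} t& b_j\\ 0&1\end{pmatrix}$, $y_j=\begin{pmatrix} 1&-b_j\\0&t\end{pmatrix}$; for even $j$: $x_j=\begin{pmatrix}1&b_j\\0&t\end{pmatrix}$, $y_j=\begin{pmatrix}t&-b_j\\0&1\end{pmatrix}$. An isomorphism $\mathbb{M}(b)\to\mathbb{M}(c)$ is a family of invertible $Z$-linear maps $\varphi_i\colon Z^2\to Z^2$ commuting with all $x_i$ and $y_i$. For odd $i$ write $B_i=b_i+b_{i+1}$ and $C_i=c_i+c_{i+1}$ (indices mod $10$). For $\beta\in\mathbb{C}\setminus\{0,-1,-2\}$,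 $\mathbb{M}_\beta$ denotes $\mathbb{M}(b)$ for a tuple $b$ with $B_1=\beta$, $B_3=1$, $B_5=-1$, $B_7=-\beta-1$, $B_9=1$ (e.g. $b_i=B_i$ for odd $i$ and $b_i=0$ for even $i$). *)

(* complex numbers are R[i] = complex R for R : realType
   (i.e. the field C, since any realType is the real line). *)
From HB Require Import structures.
From mathcomp Require Import all_boot all_order all_algebra.
From mathcomp Require Import reals complex.
Set Implicit Arguments. Unset Strict Implicit. Unset Printing Implicit Defensive.
Import Order.TTheory GRing.Theory Num.Theory.
Local Open Scope ring_scope.
Local Open Scope complex_scope.

Section PS.
Variable R : realType.
Notation C := (R[i]).

(* Z = C[[t]] : formal power series, a series is its coefficient sequence *)
Definition ps := nat -> C.
Definition pconst (a : C) : ps := fun n => if n == 0%N then a else 0.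
Definition pt : ps := fun n => if n == 1%N then 1 else 0.
Definition padd (f g : ps) : ps := fun n => f n + g n.
Definition popp (f : ps) : ps := fun n => - f n.
Definition pmul (f g : ps) : ps := fun n => \sum_(k < n.+1) f k * g (n - k)%N.
Definition tdvd (f : ps) : Prop := exists g : ps, f = pmul pt g.

(* Z-linear endomorphisms of Z^2 = 2x2 matrices over Z (acting on columns) *)
Definition mat := 'I_2 -> 'I_2 -> ps.
Definition mk (a b c d : ps) : mat := fun i j =>
  if (i : nat) == 0%N then (if (j : nat) == 0%N then a else b)
  else (if (j : nat) == 0%N then c else d).
Definition mmul (A B : mat) : mat :=
  fun i j n => \sum_(k < 2) pmul (A i k) (B k j) n.
Definition meq (A B : mat) : Prop := forall i j n, A i j n = B i j n.
Definition mid : mat := mk (pconst 1) (pconst 0) (pconst 0) (pconst 1).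
Definition minvertible (A : mat) : Prop :=
  exists B : mat, meq (mmul A B) mid /\ meq (mmul B A) mid.

(* tuples (b_1, ..., b_10) are stored as b : 'I_10 -> ps with b_10 stored at 0;
   paper index k (taken mod 10) *)
Definition at10 (b : 'I_10 -> ps) (k : nat) : ps := b (inord (k %% 10)).
Definition vtx (k : nat) : 'I_10 := inord (k %% 10).

Definition sum_zero (b : 'I_10 -> ps) : Prop :=
  forall n, \sum_(i < 10) b i n = 0.

Definition xmat (b : 'I_10 -> ps) (j : nat) : mat :=
  if odd j then mk pt (at10 b j) (pconst 0) (pconst 1)
  else mk (pconst 1) (at10 b j) (pconst 0) pt.
Definition ymat (b : 'I_10 -> ps) (j : nat) : mat :=
  if odd j then mk (pconst 1) (popp (at10 b j)) (pconst 0) pt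
  else mk pt (popp (at10 b j)) (pconst 0) (pconst 1).

(* isomorphism M(b) -> M(c) of representations of Gamma_10:
   phi_v invertible at each vertex v, and for each j = 1..10
   (x_j : j-1 -> j, y_j : j -> j-1)
   phi_j x_j^b = x_j^c phi_{j-1},  phi_{j-1} y_j^b = y_j^c phi_j *)
Definition Miso (b c : 'I_10 -> ps) : Prop :=
  exists phi : 'I_10 -> mat,
    (forall v, minvertible (phi v)) /\
    (forall j : nat, (1 <= j <= 10)%N ->
       meq (mmul (phi (vtx j)) (xmat b j)) (mmul (xmat c j) (phi (vtx j.-1))) /\
       meq (mmul (phi (vtx j.-1)) (ymat b j)) (mmul (ymat c j) (phi (vtx j)))).

Definition Csum (c : 'I_10 -> ps) (i : nat) : ps := padd (at10 c i) (at10 c i.+1).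

Definition bbeta (beta : C) : 'I_10 -> ps := fun k =>
  pconst (match (k : nat) return C with
          | 1%N => beta | 3%N => 1 | 5%N => -1 | 7%N => - beta - 1 | 9%N => 1
          | _ => 0 end).

End PS.

(* Write S_k(x) = X_1 + X_3 + ... + X_{2k-1} for the partial sums
   of the pair sums X_i = x_i + x_{i+1}.  For scalars a != 0 and r put
   N_k = a S_k(c) - S_k(b) - r S_k(c) S_k(b).  If t divides N_k for
   k = 0, ..., 4, with quotients B_k, then an explicit family phi of 2 x 2
   matrices of determinant a (built from a, r, S_k and B_k at even vertices,
   conjugated by the arrows at odd vertices) is an isomorphism
   M(b) -> M(c); intertwining the arrows y comes for free from x y = y x = t.
   For b = b(beta) the sums S_k(b) are the constants 0, beta, beta + 1, beta,
   -1, so divisibility of N_k is a scalar equation on the constant terms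
   u, w, u, v of S_1(c), ..., S_4(c).  The hypotheses on c make u, w, v
   nonzero and pairwise distinct, and then a square root in C produces
   beta, a, r solving these equations. *)
From HB Require Import structures.
From mathcomp Require Import all_boot all_order all_algebra.
From mathcomp Require Import reals complex.
From mathcomp Require Import ring.
Set Implicit Arguments. Unset Strict Implicit. Unset Printing Implicit Defensive.
Import Order.TTheory GRing.Theory Num.Theory.
Local Open Scope ring_scope.

Section ScalarEquations.
Variable F : numClosedFieldType.

Lemma root_ratio (U W : F) : U != 0 -> W != 0 -> U != W ->
  exists rho : F, [/\ (U - W) * rho ^+ 2 = U, rho != 0 & rho ^+ 2 != 1].
Proof.
move=> nzU nzW neqUW; have nzUW : U - W != 0 by rewrite subr_eq0.
exists (sqrtC (U / (U - W))); rewrite sqrtCK mulrC divfK //; split=> //.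
  by rewrite sqrtC_eq0 mulf_neq0 ?invr_eq0.
apply: contraNneq nzW => ratio1.
have UE : U = U - W by rewrite -[LHS](divfK nzUW) ratio1 mul1r.
have -> : W = U - (U - W) by ring.
by rewrite -UE subrr.
Qed.

(* The equation a x - s - r x s = 0 relating the constant terms x and s of
   the partial sums S_k(c) and S_k(b): it says that t divides N_k. *)
Definition solves (a r x s : F) : Prop := a * x - s - r * (x * s) = 0.

Lemma solves0 a r : solves a r 0 0.
Proof. by rewrite /solves !(mulr0, mul0r, subr0). Qed.

Lemma scalar_solution (u w v : F) :
  u != 0 -> w != 0 -> v != 0 -> u != w -> u != v -> w != v ->
  exists beta a r : F, [/\ beta != 0, beta != -1, beta != -2, a != 0 &
   [/\ solves a r u beta, solves a r w (beta + 1) & solves a r v (-1)]].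
Proof.
move=> nzu nzw nzv neq_uw neq_uv neq_wv.
have inv_neq (x y : F) : x != 0 -> y != 0 -> x != y -> x^-1 - y^-1 != 0.
  by move=> nzx nzy; apply: contra; rewrite subr_eq0 => /eqP/invr_inj ->.
set U := u^-1 - v^-1; set W := w^-1 - v^-1.
have nzU : U != 0 by apply: inv_neq.
have nzW : W != 0 by apply: inv_neq.
have neqUW : U != W.
  by rewrite -subr_eq0 (_ : U - W = u^-1 - w^-1) ?inv_neq // /U /W; ring.
have [rho [rhoE nz_rho rho2_neq1]] := root_ratio nzU nzW neqUW.
have rho_neq1 : rho != 1 by apply: contraNneq rho2_neq1 => ->; rewrite expr1n.
have rho_neqN1 : rho != -1 by apply: contraNneq rho2_neq1 => ->; rewrite sqrrN expr1n.
set a := U - (U - W) * rho.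
have aE : a * rho = U * (rho - 1) + (U - (U - W) * rho ^+ 2) by rewrite /a; ring.
rewrite rhoE subrr addr0 in aE.
exists (rho - 1), a, (- a - v^-1); split.
- by rewrite subr_eq0.
- by rewrite subr_eq addNr.
- by rewrite subr_eq (_ : -2 + 1 = -1 :> F) //; ring.
- apply: contraNneq (mulf_neq0 nzU (_ : rho - 1 != 0)) => [a0|].
    by rewrite -aE a0 mul0r.
  by rewrite subr_eq0.
rewrite /solves; split.
- suff -> : a * u - (rho - 1) - (- a - v^-1) * (u * (rho - 1))
          = u * (U - (U - W) * rho ^+ 2) by rewrite rhoE subrr mulr0.
  by rewrite /a /U; field; rewrite nzu nzv.
- suff -> : a * w - (rho - 1 + 1) - (- a - v^-1) * (w * (rho - 1 + 1))
          = w * (U - (U - W) * rho ^+ 2) by rewrite rhoE subrr mulr0.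
  by rewrite /a /U /W; field; rewrite nzw nzv.
- by field; rewrite nzv.
Qed.

Lemma neq_of_diff (x y : F) : y - x != 0 -> x != y.
Proof. by apply: contraNneq => ->; rewrite subrr. Qed.

Lemma partial_sums_distinct (g1 g3 g5 g7 g9 : F) :
  g1 + g3 + g5 + g7 + g9 = 0 -> g3 + g5 = 0 ->
  g3 != 0 -> g7 != 0 -> g9 != 0 -> g5 + g7 != 0 ->
  [/\ g1 + g3 + g5 + g7 != 0, g1 != g1 + g3, g1 != g1 + g3 + g5 + g7
    & g1 + g3 != g1 + g3 + g5 + g7].
Proof.
move=> sum0 g35 nz3 nz7 nz9 nz57; split.
- by apply: contraNneq nz9 => v0; move: sum0; rewrite v0 add0r => ->.
- by apply: neq_of_diff; rewrite (_ : _ - _ = g3) //; ring.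
- apply: neq_of_diff; rewrite (_ : _ - _ = (g3 + g5) + g7); last by ring.
  by rewrite g35 add0r.
- by apply: neq_of_diff; rewrite (_ : _ - _ = g5 + g7) //; ring.
Qed.

End ScalarEquations.

From Stdlib Require Import FunctionalExtensionality Ring_theory Ring.

Section PowerSeries.
Variable R : realType.
Local Notation C := (R[i]).
Local Notation ps := (ps R).
Local Notation t := (pt R).
Implicit Types f g h : ps.

(* The truncation of a series to a polynomial of degree n: products of
   series are computed coefficientwise by products of truncations. *)
Definition trunc (n : nat) f : {poly C} := \poly_(i < n.+1) f i.

Lemma coef_trunc n f i : (i <= n)%N -> (trunc n f)`_i = f i.
Proof. by move=> le_in; rewrite coef_poly ltnS le_in. Qed.

Lemma pmul_poly f g (p q : {poly C}) n :
  (forall i, (i <= n)%N -> p`_i = f i) -> (forall i, (i <= n)%N -> q`_i = g i) ->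
  pmul f g n = (p * q)`_n.
Proof.
move=> pf qg; rewrite coefM /pmul; apply: eq_bigr => j _.
by rewrite pf ?qg // ?leq_subr // -ltnS.
Qed.

Lemma coef_trunc_mul f g n i :
  (i <= n)%N -> (trunc n f * trunc n g)`_i = pmul f g i.
Proof.
move=> le_in; symmetry; apply: pmul_poly => j le_ji.
  all: by apply: coef_trunc; exact: leq_trans le_ji le_in.
Qed.

Lemma pmulC f g : pmul f g = pmul g f.
Proof.
apply: functional_extensionality => n.
by rewrite -!(coef_trunc_mul _ _ (leqnn n)) mulrC.
Qed.

Lemma pmulA f g h : pmul f (pmul g h) = pmul (pmul f g) h.
Proof.
apply: functional_extensionality => n.
rewrite (pmul_poly (p := trunc n f) (q := trunc n g * trunc n h)) => [||i];
  [|exact: coef_trunc|exact: coef_trunc_mul].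
rewrite (pmul_poly (p := trunc n f * trunc n g) (q := trunc n h)) ?mulrA // => i.
  exact: coef_trunc_mul.
exact: coef_trunc.
Qed.

Lemma pconstM (x y : C) : pmul (pconst x) (pconst y) = pconst (x * y).
Proof.
apply: functional_extensionality => n.
by rewrite (pmul_poly (p := x%:P) (q := y%:P)) -?polyCM ?coefC // => i _; rewrite coefC.
Qed.

Lemma pmul1 f : pmul (pconst 1) f = f.
Proof.
apply: functional_extensionality => n.
rewrite (pmul_poly (p := 1) (q := trunc n f)) ?mul1r ?coef_trunc // => i le_in.
  by rewrite coef1 /pconst; case: (i == 0)%N.
exact: coef_trunc.
Qed.

Lemma pmulDl f g h : pmul (padd f g) h = padd (pmul f h) (pmul g h).
Proof.
apply: functional_extensionality => n.
by rewrite /pmul /padd -big_split; apply: eq_bigr => i _; rewrite mulrDl.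
Qed.

Definition psub f g : ps := padd f (popp g).

Lemma ps_ring_theory :
  ring_theory (pconst 0) (pconst 1) (@padd R) (@pmul R) psub (@popp R) eq.
Proof.
split; [| | | exact: pmul1 | exact: pmulC | exact: pmulA | exact: pmulDl | by [] |];
  move=> *; apply: functional_extensionality => n; rewrite /padd /popp /pconst.
- by case: eqP; rewrite add0r.
- exact: addrC.
- exact: addrA.
- by case: eqP; rewrite subrr.
Qed.

Add Ring ps_ring : ps_ring_theory.

Lemma pmul_t f n : pmul t f n = if n is m.+1 then f m else 0.
Proof.
rewrite pmulC (pmul_poly (p := trunc n f) (q := 'X)) => [|i|i _].
- by rewrite coefMX; case: n => [|m] //=; rewrite coef_trunc.
- exact: coef_trunc.
- by rewrite coefX /pt; case: (i == 1)%N.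
Qed.

Lemma t_cancel f g : pmul t f = pmul t g -> f = g.
Proof.
move=> tf_tg; apply: functional_extensionality => n.
by have := congr1 (fun F => F n.+1) tf_tg; rewrite /= !pmul_t.
Qed.

(* Division by t, meaningful when the constant term vanishes. *)
Definition pdivt f : ps := fun n => f n.+1.

Lemma pdivtK f : f 0%N = 0 -> pmul t (pdivt f) = f.
Proof. by move=> f0; apply: functional_extensionality => -[|n]; rewrite pmul_t. Qed.

Lemma tdvdP f : tdvd f <-> f 0%N = 0.
Proof.
split=> [[g ->]|f0]; first by rewrite pmul_t.
by exists (pdivt f); rewrite pdivtK.
Qed.

Lemma ntdvd_const f : ~ tdvd f -> f 0%N != 0.
Proof. by move=> ndvd; apply/eqP => /tdvdP. Qed.

Lemma pmul_const_term f g : pmul f g 0%N = f 0%N * g 0%N.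
Proof. by rewrite /pmul big_ord1 subn0. Qed.

(* 2 x 2 matrices over Z: every matrix is given by its four entries, and
   the entrywise description of products reduces matrix identities to
   ring identities in Z. *)
Implicit Types A B P Q X Y : mat R.

Lemma mk_eta A : A = mk (A ord0 ord0) (A ord0 ord_max) (A ord_max ord0) (A ord_max ord_max).
Proof.
apply: functional_extensionality => -[[|[|i]] lti]; last by [].
all: apply: functional_extensionality => -[[|[|j]] ltj] //.
all: by congr A; apply: val_inj.
Qed.

Lemma meqE A B : meq A B <-> A = B.
Proof.
split=> [AB|-> //]; do 3 (apply: functional_extensionality => ?); exact: AB.
Qed.

Lemma mmul_mk (a b c d a' b' c' d' : ps) : mmul (mk a b c d) (mk a' b' c' d') =
  mk (padd (pmul a a') (pmul b c')) (padd (pmul a b') (pmul b d'))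
     (padd (pmul c a') (pmul d c')) (padd (pmul c b') (pmul d d')).
Proof.
do 3 apply: functional_extensionality => ?.
by rewrite /mmul !big_ord_recl big_ord0 addr0 /mk /=; do 2 case: ifP.
Qed.

Lemma mk_inj (a b c d a' b' c' d' : ps) :
  mk a b c d = mk a' b' c' d' -> [/\ a = a', b = b', c = c' & d = d'].
Proof.
move=> E; split; [ exact: (congr1 (fun M : mat R => M ord0 ord0) E)
                 | exact: (congr1 (fun M : mat R => M ord0 ord_max) E)
                 | exact: (congr1 (fun M : mat R => M ord_max ord0) E)
                 | exact: (congr1 (fun M : mat R => M ord_max ord_max) E)].
Qed.

Lemma mmulA A B P : mmul A (mmul B P) = mmul (mmul A B) P.
Proof. by rewrite [A]mk_eta [B]mk_eta [P]mk_eta !mmul_mk; f_equal; ring. Qed.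

Definition tI : mat R := mk t (pconst 0) (pconst 0) t.

Lemma tI_comm A : mmul tI A = mmul A tI.
Proof. by rewrite [A]mk_eta !mmul_mk; f_equal; ring. Qed.

Lemma tI_cancel A B : mmul tI A = mmul tI B -> A = B.
Proof.
have tl x y : padd (pmul t x) (pmul (pconst 0) y) = pmul t x by ring.
have tr x y : padd (pmul (pconst 0) x) (pmul t y) = pmul t y by ring.
rewrite [A]mk_eta [B]mk_eta !mmul_mk !tl !tr.
by case/mk_inj => /t_cancel-> /t_cancel-> /t_cancel-> /t_cancel->.
Qed.

Lemma xmat_ymat b j :
  mmul (xmat b j) (ymat b j) = tI /\ mmul (ymat b j) (xmat b j) = tI.
Proof.
by rewrite /xmat /ymat /tI; case: (odd j); rewrite !mmul_mk; split; f_equal; ring.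
Qed.

(* Since x y = y x = t, a family of maps commuting with the arrows x
   automatically commutes with the arrows y. *)
Lemma intertwine_y X Y X' Y' P Q :
  mmul X Y = tI -> mmul Y' X' = tI -> mmul P X = mmul X' Q -> mmul Q Y = mmul Y' P.
Proof.
move=> XY YX' PX; apply: tI_cancel.
by rewrite -{1}YX' -mmulA (mmulA X') -PX -mmulA XY mmulA -tI_comm.
Qed.

Lemma minvertible_det (a : C) (p q r s : ps) :
  a != 0 -> psub (pmul p s) (pmul q r) = pconst a -> minvertible (mk p q r s).
Proof.
move=> nza det_a.
have inv_a : pmul (pconst a^-1) (pconst a) = pconst 1 by rewrite pconstM mulVf.
exists (mk (pmul (pconst a^-1) s) (pmul (pconst a^-1) (popp q))
           (pmul (pconst a^-1) (popp r)) (pmul (pconst a^-1) p)).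
by rewrite /mid !mmul_mk; split; apply/meqE; f_equal; rewrite -?inv_a -?det_a; ring.
Qed.

End PowerSeries.

Section IsoCriterion.
Variable R : realType.
Local Notation C := (R[i]).
Local Notation ps := (ps R).
Local Notation t := (pt R).
Add Ring ps_ring : (ps_ring_theory R).

Fixpoint pair_sums (x : 'I_10 -> ps) (k j : nat) : ps :=
  if k is k'.+1 then padd (Csum x j) (pair_sums x k' j.+2) else pconst 0.
Definition psum (x : 'I_10 -> ps) (k : nat) : ps := pair_sums x k 1.

Lemma sum_zero_last (x : 'I_10 -> ps) : sum_zero x ->
  at10 x 10 = popp (padd (at10 x 1) (padd (at10 x 2) (padd (at10 x 3) (padd (at10 x 4)
    (padd (at10 x 5) (padd (at10 x 6) (padd (at10 x 7) (padd (at10 x 8) (at10 x 9))))))))).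
Proof.
move=> x0; apply: functional_extensionality => n; apply/eqP.
rewrite /popp /padd -addr_eq0 -(x0 n) (eq_bigr (fun i : 'I_10 => at10 x i n)).
  by rewrite !big_ord_recl big_ord0 addr0.
by move=> i _; rewrite /at10 modn_small // inord_val.
Qed.

Variables (b c : 'I_10 -> ps) (a r : C).

Definition Nk (k : nat) : ps :=
  psub (psub (pmul (pconst a) (psum c k)) (psum b k))
       (pmul (pconst r) (pmul (psum c k) (psum b k))).

Variable B : nat -> ps.

(* The candidate isomorphism at the even vertex 2k ... *)
Definition phiE (k : nat) : mat R :=
  mk (padd (pconst 1) (pmul (pconst r) (psum c k))) (B k)
     (pmul t (pconst r)) (psub (pconst a) (pmul (pconst r) (psum b k))).

(* ... and at the odd vertex j = 2k+1: phiO k j = x_j(c) phiE k x_j(b)^-1,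
   which has entries in Z. *)
Definition phiO (k j : nat) : mat R :=
  let P := padd (padd (pconst 1) (pmul (pconst r) (psum c k))) (pmul (pconst r) (at10 c j)) in
  let Q := psub (pconst a) (pmul (pconst r) (psum b k)) in
  mk P (psub (padd (pmul t (B k)) (pmul (at10 c j) Q)) (pmul (at10 b j) P))
     (pconst r) (psub Q (pmul (pconst r) (at10 b j))).

Definition phi (v : nat) : mat R := if odd v then phiO v./2 v else phiE v./2.

Hypotheses (b0 : sum_zero b) (c0 : sum_zero c) (nza : a != 0).
Hypothesis tB : forall k, (k < 5)%N -> pmul t (B k) = Nk k.

(* N_0 = 0, so B_0 = 0. *)
Lemma B0 : B 0 = pconst 0.
Proof. by apply: t_cancel; rewrite tB // /Nk /psum /=; ring. Qed.

Lemma vtxK j : (j < 10)%N -> nat_of_ord (vtx j) = j.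
Proof. by move=> ltj; rewrite /vtx modn_small // inordK. Qed.

Lemma vtx10 : nat_of_ord (vtx 10) = 0%N.
Proof. by rewrite /vtx modnn inordK. Qed.

Ltac quotient_relations H1 H2 H3 H4 :=
  pose proof (tB (k := 1%N) isT) as H1; pose proof (tB (k := 2%N) isT) as H2;
  pose proof (tB (k := 3%N) isT) as H3; pose proof (tB (k := 4%N) isT) as H4;
  rewrite /Nk /psum /= /Csum in H1 H2 H3 H4.

Ltac ring_mod_quotients H1 H2 H3 H4 :=
  ring_simplify [H1]; ring_simplify [H2]; ring_simplify [H3]; ring [H4].

(* phi intertwines the arrows x_j; at j = 10 this uses that b and c have
   zero sum, i.e. that S_5(b) = S_5(c) = 0. *)
Lemma phi_x j : (1 <= j <= 10)%N ->
  mmul (phi (vtx j)) (xmat b j) = mmul (xmat c j) (phi (vtx j.-1)).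
Proof.
quotient_relations H1 H2 H3 H4.
have hb := sum_zero_last b0; have hc := sum_zero_last c0.
case: j => [|[|[|[|[|[|[|[|[|[|[|j]]]]]]]]]]] //= _;
  rewrite ?vtx10 !vtxK // /phi /xmat /= /phiE /phiO /psum /= !mmul_mk; f_equal.
all: rewrite /Csum ?B0 ?hb ?hc; ring_mod_quotients H1 H2 H3 H4.
Qed.

(* Each phi_v has constant determinant a. *)
Lemma phi_invertible v : (v < 10)%N -> minvertible (phi v).
Proof.
quotient_relations H1 H2 H3 H4.
case: v => [|[|[|[|[|[|[|[|[|[|v]]]]]]]]]] //= _; apply: (minvertible_det nza).
all: rewrite /psum /= /Csum ?B0; ring_mod_quotients H1 H2 H3 H4.
Qed.

Lemma Miso_of_quotients : Miso b c.
Proof.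
exists (fun v : 'I_10 => phi v); split=> [v|j jr]; first exact: phi_invertible.
have xrel := phi_x jr; split; apply/meqE => //.
exact: intertwine_y (xmat_ymat b j).1 (xmat_ymat c j).2 xrel.
Qed.

End IsoCriterion.

Lemma Miso_criterion (R : realType) (b c : 'I_10 -> ps R) (a r : R[i]) :
  sum_zero b -> sum_zero c -> a != 0 ->
  (forall k, (k < 5)%N -> tdvd (Nk b c a r k)) -> Miso b c.
Proof.
move=> b0 c0 nza tN.
apply: (Miso_of_quotients (a := a) (r := r) (B := fun k => pdivt (Nk b c a r k))) => //.
by move=> k lt5; apply/pdivtK/tdvdP/tN.
Qed.

From mathcomp Require Import ring.

Section ConstantTerms.
Variable R : realType.
Local Notation C := (R[i]).
Local Notation ps := (ps R).

Lemma tdvd_Nk (b c : 'I_10 -> ps) (a r : C) k :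
  tdvd (Nk b c a r k) <-> solves a r (psum c k 0%N) (psum b k 0%N).
Proof. by rewrite tdvdP /Nk /psub /padd /popp !pmul_const_term. Qed.

Lemma psum_const (c : 'I_10 -> ps) :
  [/\ psum c 1 0%N = Csum c 1 0%N, psum c 2 0%N = Csum c 1 0%N + Csum c 3 0%N,
      psum c 3 0%N = Csum c 1 0%N + Csum c 3 0%N + Csum c 5 0%N
    & psum c 4 0%N = Csum c 1 0%N + Csum c 3 0%N + Csum c 5 0%N + Csum c 7 0%N].
Proof. by rewrite /psum /= /padd /pconst /=; split; ring. Qed.

Lemma pair_sums_total (c : 'I_10 -> ps) : sum_zero c ->
  Csum c 1 0%N + Csum c 3 0%N + Csum c 5 0%N + Csum c 7 0%N + Csum c 9 0%N = 0.
Proof.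
move=> c0; have := congr1 (fun f => f 0%N) (sum_zero_last c0).
by rewrite /Csum /padd /popp /= => ->; ring.
Qed.

Lemma bbeta_sum_zero (beta : C) : sum_zero (bbeta beta).
Proof.
move=> n; rewrite !big_ord_recl big_ord0 /bbeta /pconst /=.
by case: (n == 0)%N; ring.
Qed.

Lemma psum_bbeta (beta : C) :
  [/\ psum (bbeta beta) 1 0%N = beta, psum (bbeta beta) 2 0%N = beta + 1,
      psum (bbeta beta) 3 0%N = beta & psum (bbeta beta) 4 0%N = -1].
Proof.
rewrite /psum /= /Csum /padd /at10 /bbeta !modn_small // !inordK // /pconst /=.
by split; ring.
Qed.

End ConstantTerms.

Theorem proposition2p9 (R : realType) (c : 'I_10 -> ps R) :
  sum_zero c ->
  (forall i : nat, (i < 10)%N -> odd i -> ~ tdvd (Csum c i)) ->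
  tdvd (padd (Csum c 3) (Csum c 5)) ->
  (forall i : nat, (i < 10)%N -> odd i -> i <> 3%N ->
     ~ tdvd (padd (Csum c i) (Csum c (i + 2)))) ->
  exists beta : R[i],
    [/\ beta != 0, beta != -1, beta != -2 & Miso (bbeta beta) c].
Proof.
move=> c0 ndvdC dvd35 ndvdC2.
have nz i : (i < 10)%N -> odd i -> Csum c i 0%N != 0.
  by move=> lti oddi; apply/ntdvd_const/ndvdC.
have nz13 : Csum c 1 0%N + Csum c 3 0%N != 0.
  by apply: (ntdvd_const (f := padd (Csum c 1) (Csum c 3))); apply: ndvdC2.
have nz57 : Csum c 5 0%N + Csum c 7 0%N != 0.
  by apply: (ntdvd_const (f := padd (Csum c 5) (Csum c 7))); apply: ndvdC2.
move/tdvdP: dvd35; rewrite /padd => g35.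
have [nzv neq_uw neq_uv neq_wv] := partial_sums_distinct (pair_sums_total c0) g35
  (nz 3%N isT isT) (nz 7%N isT isT) (nz 9%N isT isT) nz57.
have [beta [a [r [nb0 nb1 nb2 nza [sol_u sol_w sol_v]]]]] :=
  scalar_solution (nz 1%N isT isT) nz13 nzv neq_uw neq_uv neq_wv.
exists beta; split=> //; apply: Miso_criterion (bbeta_sum_zero beta) c0 nza _ => k lt5.
have [c1 c2 c3 c4] := psum_const c; have [b1 b2 b3 b4] := psum_bbeta beta.
apply/tdvd_Nk; case: k lt5 => [|[|[|[|[|k]]]]] // _.
- exact: (solves0 a r).
- by rewrite c1 b1.
- by rewrite c2 b2.
- by rewrite c3 b3 -addrA g35 addr0.
- by rewrite c4 b4.
Qed.
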